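(* Let $0<\epsilon<1$ and let $X^\epsilon$ be the solution of the initial value problem described in the context. Then there is a constant $C>0$ such that for every $\epsilon\in(0,1)$ and every $t\geq 0$, $$\int_{-\pi}^{+\pi}|X^\epsilon(x,t)|\,dx\leq \int_{-\pi}^{+\pi}|v_0^\epsilon(x)|\,dx\leq C.$$
   Context: Let $\mathcal{C}_b(\mathbb{R})$ denote the Banach space of bounded continuous real functions on $\mathbb{R}$ with the sup norm. For a real function $u$ set $u^+=\max(0,u)$, $u^-=\max(0,-u)$, so $u=u^+-u^-$, $|u|=u^++u^-$. For $0<\epsilon<1$ let $u^\epsilon:\mathbb{R}\times[0,\infty)\to\mathbb{R}$ be $2\pi$-periodic in $x$, with $t\mapsto u^\epsilon(\cdot,t)$ continuous from $[0,\infty)$ into $\mathcal{C}_b(\mathbb{R})$, and assume there is $M_1>0$ with $|u^\epsilon(x,t)|\leq M_1$ for all $\epsilon$, $x$, $t\geq0$. Let $v_0^\epsilon\in\mathcal{C}_b(\mathbb{R})$ be $2\pi$-periodic with $\sup_{\epsilon}\int_{-\pi}^{\pi}|v_0^\epsilon(x)|dx<\infty$. Let $X^\epsilon$ be the unique global $\mathcal{C}^1$ solution $t\mapsto X^\epsilon(\cdot,t)\in\mathcal{C}_b(\mathbb{R})$ of the linear ODE $$\frac{d}{dt}X^\epsilon(x,t)=\frac{1}{\epsilon}\big[X^\epsilon(x-\epsilon,t)u^{\epsilon+}(x-\epsilon,t)-X^\epsilon(x,t)|u^{\epsilon}(x,t)|+X^\epsilon(x+\epsilon,t)u^{\epsilon-}(x+\epsilon,t)\big],\quad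 X^\epsilon(x,0)=v_0^\epsilon(x).$$ *)

From Stdlib Require Import Reals.
From Coquelicot Require Import Coquelicot.
Open Scope R_scope.

Definition pospart (a : R) : R := Rmax 0 a.
Definition negpart (a : R) : R := Rmax 0 (- a).

Definition periodic2pi (f : R -> R) : Prop := forall x, f (x + 2 * PI) = f x.

Definition in_Cb (f : R -> R) : Prop :=
  (forall x, continuous f x) /\ exists B, forall x, Rabs (f x) <= B.

Definition sup_continuous (F : R -> R -> R) : Prop :=
  forall t, 0 <= t -> forall d, 0 < d -> exists eta, 0 < eta /\
    forall s, 0 <= s -> Rabs (s - t) < eta ->
      forall x, Rabs (F x s - F x t) <= d.

Definition rhs (eps : R) (u X : R -> R -> R) (x t : R) : R :=
  / eps * (X (x - eps) t * pospart (u (x - eps) t)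
           - X x t * Rabs (u x t)
           + X (x + eps) t * negpart (u (x + eps) t)).

Definition sup_derivative (X D : R -> R -> R) : Prop :=
  forall t, 0 <= t -> forall d, 0 < d -> exists eta, 0 < eta /\
    forall h, h <> 0 -> Rabs h < eta -> 0 <= t + h ->
      forall x, Rabs ((X x (t + h) - X x t) / h - D x t) <= d.

Definition is_C1_solution (eps : R) (u : R -> R -> R) (v0 : R -> R)
  (X : R -> R -> R) : Prop :=
  (forall t, 0 <= t -> in_Cb (fun x => X x t)) /\
  sup_derivative X (rhs eps u X) /\
  sup_continuous (rhs eps u X) /\
  (forall x, X x 0 = v0 x).

From Stdlib Require Import Reals Lra Classical.
From Coquelicot Require Import Coquelicot.
Open Scope R_scope.

(* At a fixed time the right-hand side is the operator [upwind e], and one explicit Euler step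
   f + h (upwind e U f) with h |U| <= e is a monotone scheme: the new value at x is a nonnegative
   combination of f (x - e), f x, f (x + e), and the weight h/e |U x| lost at x reappears at the
   neighbours x -+ e.  Integrating over a period, where shifts do not change integrals, the L1
   norm does not grow along such a step.  Since X is differentiable in time in the sup norm, the
   L1 norm N(t) of X(., t) is locally Lipschitz and satisfies N(t + h) <= N(t) + o(h) for h > 0,
   and a continuous induction on [0, t] gives N(t) <= N(0).  The periodicity of X(., t) needed
   here follows from a Gronwall argument: X(x + 2 pi, t) - X(x, t) solves the same linear
   equation with zero initial datum. *)

Lemma continuous_Rplus (f g : R -> R) x :
  continuous f x -> continuous g x -> continuous (fun y => f y + g y) x.
Proof. exact (continuous_plus f g x). Qed.

Lemma continuous_Rmult (f g : R -> R) x :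
  continuous f x -> continuous g x -> continuous (fun y => f y * g y) x.
Proof. exact (continuous_mult f g x). Qed.

Lemma continuous_Ropp (f : R -> R) x :
  continuous f x -> continuous (fun y => - f y) x.
Proof. exact (continuous_opp f x). Qed.

Lemma continuous_Rminus (f g : R -> R) x :
  continuous f x -> continuous g x -> continuous (fun y => f y - g y) x.
Proof.
  intros Hf Hg. apply (continuous_Rplus f (fun y => - g y)); auto.
  now apply continuous_Ropp.
Qed.

Lemma continuous_shift (f : R -> R) a x :
  continuous f (x + a) -> continuous (fun y => f (y + a)) x.
Proof.
  intros Hf. apply (continuous_comp (fun y => y + a) f); auto.
  apply continuous_Rplus; [apply continuous_id | apply continuous_const].
Qed.

Lemma pospart_eq a : pospart a = (a + Rabs a) / 2.
Proof. unfold pospart, Rmax, Rabs. destruct (Rle_dec 0 a), (Rcase_abs a); lra. Qed.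

Lemma negpart_eq a : negpart a = (Rabs a - a) / 2.
Proof. unfold negpart, Rmax, Rabs. destruct (Rle_dec 0 (- a)), (Rcase_abs a); lra. Qed.

Lemma pospart_bounds a : 0 <= pospart a <= Rabs a.
Proof. rewrite pospart_eq. unfold Rabs. destruct (Rcase_abs a); lra. Qed.

Lemma negpart_bounds a : 0 <= negpart a <= Rabs a.
Proof. rewrite negpart_eq. unfold Rabs. destruct (Rcase_abs a); lra. Qed.

Lemma pospart_add_negpart a : pospart a + negpart a = Rabs a.
Proof. rewrite pospart_eq, negpart_eq. field. Qed.

Lemma continuous_pospart (f : R -> R) x :
  continuous f x -> continuous (fun y => pospart (f y)) x.
Proof.
  intros Hf. apply (continuous_ext (fun y => (f y + Rabs (f y)) * / 2)).
  - intros y. now rewrite pospart_eq.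
  - apply continuous_Rmult; [apply continuous_Rplus | apply continuous_const]; auto.
    now apply continuous_Rabs_comp.
Qed.

Lemma continuous_negpart (f : R -> R) x :
  continuous f x -> continuous (fun y => negpart (f y)) x.
Proof.
  intros Hf. apply (continuous_ext (fun y => (Rabs (f y) - f y) * / 2)).
  - intros y. now rewrite negpart_eq.
  - apply continuous_Rmult; [apply continuous_Rminus | apply continuous_const]; auto.
    now apply continuous_Rabs_comp.
Qed.

Definition upwind (e : R) (U f : R -> R) (x : R) : R :=
  / e * (f (x - e) * pospart (U (x - e)) - f x * Rabs (U x)
         + f (x + e) * negpart (U (x + e))).

Lemma rhs_upwind e (U X : R -> R -> R) x t :
  rhs e U X x t = upwind e (fun y => U y t) (fun y => X y t) x.
Proof. reflexivity. Qed.

Ltac solve_continuous :=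
  intros; repeat match goal with
  | |- continuous (fun _ => _) _ => apply continuous_const
  | |- continuous (fun y => _ - _) _ => apply continuous_Rminus
  | |- continuous (fun y => _ + _) _ => apply continuous_Rplus
  | |- continuous (fun y => - _) _ => apply continuous_Ropp
  | |- continuous (fun y => _ * _) _ => apply continuous_Rmult
  | |- continuous (fun y => Rabs _) _ => apply continuous_Rabs_comp
  | |- continuous (fun y => pospart _) _ => apply continuous_pospart
  | |- continuous (fun y => negpart _) _ => apply continuous_negpart
  | |- continuous (fun y => ?f (y + ?a)) _ => apply (continuous_shift f a)
  | |- continuous (fun y => ?f (y - ?a)) _ => apply (continuous_shift f (- a))
  | |- _ => solve [auto]
  end.

Lemma continuous_upwind e (U f : R -> R) x :
  (forall y, continuous U y) -> (forall y, continuous f y) ->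
  continuous (upwind e U f) x.
Proof. unfold upwind. solve_continuous. Qed.

#[local] Hint Resolve continuous_upwind : core.

Lemma ex_RInt_continuous_R (f : R -> R) a b : (forall x, continuous f x) -> ex_RInt f a b.
Proof. intros Hf. apply (ex_RInt_continuous (V := R_CompleteNormedModule)); auto. Qed.

Ltac solve_ex_RInt := apply ex_RInt_continuous_R; solve_continuous.

Lemma RInt_Rplus (f g : R -> R) a b : (forall x, continuous f x) -> (forall x, continuous g x) ->
  RInt (fun x => f x + g x) a b = RInt f a b + RInt g a b.
Proof. intros. apply (RInt_plus f g); solve_ex_RInt. Qed.

Lemma RInt_Rminus (f g : R -> R) a b : (forall x, continuous f x) -> (forall x, continuous g x) ->
  RInt (fun x => f x - g x) a b = RInt f a b - RInt g a b.
Proof. intros. apply (RInt_minus f g); solve_ex_RInt. Qed.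

Lemma RInt_Rscal (f : R -> R) k a b : (forall x, continuous f x) ->
  RInt (fun x => k * f x) a b = k * RInt f a b.
Proof. intros. apply (RInt_scal f); solve_ex_RInt. Qed.

Lemma RInt_Rplus_const (f : R -> R) k a b : (forall x, continuous f x) ->
  RInt (fun x => f x + k) a b = RInt f a b + (b - a) * k.
Proof.
  intros. rewrite RInt_Rplus by solve_continuous.
  now rewrite (RInt_const (V := R_CompleteNormedModule)).
Qed.

Lemma RInt_Rle (f g : R -> R) a b : a <= b ->
  (forall x, continuous f x) -> (forall x, continuous g x) ->
  (forall x, f x <= g x) -> RInt f a b <= RInt g a b.
Proof. intros. apply RInt_le; auto; solve_ex_RInt. Qed.

Lemma RInt_periodic_shift (g : R -> R) a : (forall x, continuous g x) -> periodic2pi g ->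
  RInt (fun x => g (x + a)) (- PI) PI = RInt g (- PI) PI.
Proof.
  intros Hc Hp.
  assert (Ex : forall b c, ex_RInt g b c) by (intros; now apply ex_RInt_continuous_R).
  assert (Hshift : forall s b c, RInt (fun x => g (x + s)) b c = RInt g (b + s) (c + s)).
  { intros s b c. assert (E := RInt_comp_lin g 1 s b c).
    rewrite !Rmult_1_l in E. rewrite <- E by apply Ex.
    apply RInt_ext. intros x _. unfold scal; simpl; unfold mult; simpl.
    now rewrite !Rmult_1_l. }
  assert (Hwrap : RInt g (PI + a) PI = RInt g (- PI + a) (- PI)).
  { replace (RInt g (PI + a) PI) with (RInt g (- PI + a + 2 * PI) (- PI + 2 * PI))
      by (f_equal; ring).
    rewrite <- Hshift. apply RInt_ext. intros x _. apply Hp. }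
  rewrite Hshift.
  rewrite <- (RInt_Chasles g (- PI + a) (- PI) (PI + a)), <- (RInt_Chasles g (- PI) PI (PI + a))
    by apply Ex.
  rewrite <- Hwrap, <- (opp_RInt_swap g PI (PI + a)) by apply Ex.
  change (- RInt g PI (PI + a) + (RInt g (- PI) PI + RInt g PI (PI + a)) = RInt g (- PI) PI).
  ring.
Qed.

Lemma upwind_bound e (U f : R -> R) B M x : 0 < e ->
  (forall y, Rabs (f y) <= B) -> (forall y, Rabs (U y) <= M) ->
  Rabs (upwind e U f x) <= 3 * M / e * B.
Proof.
  intros He HB HM.
  assert (Hterm : forall y p, 0 <= p <= Rabs (U y) -> Rabs (f y * p) <= B * M).
  { intros y p Hp. rewrite Rabs_mult, (Rabs_pos_eq p) by lra.
    apply Rmult_le_compat; [apply Rabs_pos | lra | apply HB | specialize (HM y); lra]. }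
  assert (T1 := Hterm (x - e) _ (pospart_bounds (U (x - e)))).
  assert (T2 := Hterm x (Rabs (U x)) (conj (Rabs_pos _) (Rle_refl _))).
  assert (T3 := Hterm (x + e) _ (negpart_bounds (U (x + e)))).
  unfold upwind. rewrite Rabs_mult, Rabs_pos_eq by (left; now apply Rinv_0_lt_compat).
  replace (3 * M / e * B) with (/ e * (B * M + B * M + B * M)) by (field; lra).
  apply Rmult_le_compat_l; [left; now apply Rinv_0_lt_compat|].
  unfold Rminus. eapply Rle_trans; [apply Rabs_triang|].
  eapply Rle_trans; [apply Rplus_le_compat_r, Rabs_triang|].
  rewrite Rabs_Ropp. change (x + - e) with (x - e). lra.
Qed.

Lemma upwind_sub_shift e (U f : R -> R) x : periodic2pi U ->
  upwind e U f (x + 2 * PI) - upwind e U f x = upwind e U (fun y => f (y + 2 * PI) - f y) x.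
Proof.
  intros HU. unfold upwind.
  replace (x + 2 * PI - e) with (x - e + 2 * PI) by ring.
  replace (x + 2 * PI + e) with (x + e + 2 * PI) by ring.
  rewrite !HU. ring.
Qed.

Lemma upwind_step_abs_le e h (U f : R -> R) x : 0 < e -> 0 <= h -> h * Rabs (U x) <= e ->
  Rabs (f x + h * upwind e U f x) <=
    Rabs (f x) - h / e * (Rabs (f x) * Rabs (U x))
    + h / e * (Rabs (f (x - e)) * pospart (U (x - e)))
    + h / e * (Rabs (f (x + e)) * negpart (U (x + e))).
Proof.
  intros He Hh HhU. set (q := h / e).
  assert (Hq : 0 <= q) by (unfold q; apply Rdiv_le_0_compat; lra).
  assert (Hq1 : q * Rabs (U x) <= 1).
  { unfold q. apply (Rmult_le_reg_l e); auto. field_simplify; lra. }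
  assert (Hcomb : f x + h * upwind e U f x
    = (1 - q * Rabs (U x)) * f x + q * pospart (U (x - e)) * f (x - e)
      + q * negpart (U (x + e)) * f (x + e)) by (unfold upwind, q; field; lra).
  rewrite Hcomb.
  destruct (pospart_bounds (U (x - e))), (negpart_bounds (U (x + e))).
  eapply Rle_trans; [apply Rabs_triang|].
  eapply Rle_trans; [apply Rplus_le_compat_r, Rabs_triang|].
  rewrite !Rabs_mult, !(Rabs_pos_eq (1 - _)), !(Rabs_pos_eq q), (Rabs_pos_eq (pospart _)),
    (Rabs_pos_eq (negpart _)) by lra.
  lra.
Qed.

Lemma upwind_step_L1_le e h M (U f : R -> R) : 0 < e -> 0 <= h -> h * M <= e ->
  (forall x, continuous U x) -> (forall x, continuous f x) ->
  periodic2pi U -> periodic2pi f -> (forall x, Rabs (U x) <= M) ->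
  RInt (fun x => Rabs (f x + h * upwind e U f x)) (- PI) PI <= RInt (fun x => Rabs (f x)) (- PI) PI.
Proof.
  intros He Hh HhM HUc Hfc HUp Hfp HM.
  assert (HPI := PI_RGT_0).
  set (q := h / e).
  set (Gp := fun y => Rabs (f y) * pospart (U y)).
  set (Gn := fun y => Rabs (f y) * negpart (U y)).
  assert (HGp : forall y, continuous Gp y) by (unfold Gp; solve_continuous).
  assert (HGn : forall y, continuous Gn y) by (unfold Gn; solve_continuous).
  eapply Rle_trans.
  { apply (RInt_Rle _ (fun x => Rabs (f x) - q * (Rabs (f x) * Rabs (U x))
                                + q * Gp (x + - e) + q * Gn (x + e)));
      [lra | solve_continuous.. |].
    intros x. apply upwind_step_abs_le; auto.
      eapply Rle_trans; [|apply HhM]. apply Rmult_le_compat_l; auto. }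
  rewrite !RInt_Rplus, RInt_Rminus, !RInt_Rscal by solve_continuous.
  rewrite !RInt_periodic_shift by (auto; intros y; unfold Gp, Gn; now rewrite HUp, Hfp).
  assert (Hsplit : RInt Gp (- PI) PI + RInt Gn (- PI) PI
                   = RInt (fun y => Rabs (f y) * Rabs (U y)) (- PI) PI).
  { rewrite <- RInt_Rplus by auto. apply RInt_ext. intros y _.
    unfold Gp, Gn. now rewrite <- Rmult_plus_distr_l, pospart_add_negpart. }
  nra.
Qed.

Lemma sup_derivative_remainder (X D : R -> R -> R) c : sup_derivative X D -> 0 <= c ->
  forall d, 0 < d -> exists eta, 0 < eta /\ forall h, Rabs h < eta -> 0 <= c + h ->
    forall x, Rabs (X x (c + h) - X x c - h * D x c) <= Rabs h * d.
Proof.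
  intros HXD Hc d Hd. destruct (HXD c Hc d Hd) as [eta [Heta Hquot]].
  exists eta. split; auto. intros h Hh Hch x.
  destruct (Req_dec h 0) as [->|Hh0].
  - rewrite Rplus_0_r, Rabs_R0. replace (X x c - X x c - 0 * D x c) with 0 by ring.
    rewrite Rabs_R0. lra.
  - replace (X x (c + h) - X x c - h * D x c) with (h * ((X x (c + h) - X x c) / h - D x c))
      by (field; auto).
    rewrite Rabs_mult. apply Rmult_le_compat_l; auto using Rabs_pos.
Qed.

Lemma sup_derivative_lipschitz (X D : R -> R -> R) c K : sup_derivative X D -> 0 <= c ->
  (forall x, Rabs (D x c) <= K) -> exists eta, 0 < eta /\
    forall s, 0 <= s -> Rabs (s - c) < eta ->
    forall x, Rabs (X x s - X x c) <= (K + 1) * Rabs (s - c).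
Proof.
  intros HXD Hc HK. destruct (sup_derivative_remainder X D c HXD Hc 1 Rlt_0_1) as [eta [Heta Hrem]].
  exists eta. split; auto. intros s Hs Hsc x.
  specialize (Hrem (s - c) Hsc ltac:(lra) x). replace (c + (s - c)) with s in Hrem by ring.
  assert (Hlin : Rabs ((s - c) * D x c) <= Rabs (s - c) * K)
    by (rewrite Rabs_mult; apply Rmult_le_compat_l; auto using Rabs_pos).
  assert (Htri := Rabs_triang (X x s - X x c - (s - c) * D x c) ((s - c) * D x c)).
  replace (X x s - X x c - (s - c) * D x c + (s - c) * D x c) with (X x s - X x c) in Htri by ring.
  lra.
Qed.

Lemma sup_derivative_shift_sub (X D : R -> R -> R) a : sup_derivative X D ->
  sup_derivative (fun x t => X (x + a) t - X x t) (fun x t => D (x + a) t - D x t).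
Proof.
  intros HXD t Ht d Hd. destruct (HXD t Ht (d / 2) ltac:(lra)) as [eta [Heta Hquot]].
  exists eta. split; auto. intros h Hh0 Hh Hth x.
  specialize (Hquot h Hh0 Hh Hth). assert (H1 := Hquot (x + a)). assert (H2 := Hquot x).
  replace ((X (x + a) (t + h) - X x (t + h) - (X (x + a) t - X x t)) / h - (D (x + a) t - D x t))
    with (((X (x + a) (t + h) - X (x + a) t) / h - D (x + a) t)
          - ((X x (t + h) - X x t) / h - D x t)) by (field; auto).
  unfold Rminus at 1. eapply Rle_trans; [apply Rabs_triang|]. rewrite Rabs_Ropp. lra.
Qed.

Lemma continuous_induction (P : R -> Prop) T : 0 <= T -> P 0 ->
  (forall c, 0 < c <= T -> (forall r, 0 <= r < c -> P r) -> P c) ->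
  (forall c, 0 <= c < T -> P c -> exists eta, 0 < eta /\ forall h, 0 < h < eta -> P (c + h)) ->
  P T.
Proof.
  intros HT P0 Hclosed Hstep.
  set (E := fun s => 0 <= s <= T /\ forall r, 0 <= r <= s -> P r).
  assert (HE0 : E 0) by (split; [lra | intros r Hr; now replace r with 0 by lra]).
  destruct (completeness E (ex_intro _ T (fun s Hs => proj2 (proj1 Hs))) (ex_intro _ 0 HE0))
    as [m [Hub Hlub]].
  assert (Hm0 : 0 <= m) by now apply Hub.
  assert (HmT : m <= T) by (apply Hlub; intros s [Hs _]; lra).
  assert (Hbelow : forall r, 0 <= r < m -> P r).
  { intros r Hr. destruct (classic (is_upper_bound E r)) as [Hu|Hu].
    - specialize (Hlub r Hu). lra.
    - apply not_all_ex_not in Hu. destruct Hu as [s Hs].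
      apply imply_to_and in Hs. destruct Hs as [[_ Hs] Hsr]. apply Hs. lra. }
  assert (Pm : P m).
  { destruct (Req_dec m 0) as [->|Hm]; auto. apply Hclosed; auto. lra. }
  assert (HEm : E m).
  { split; [lra|]. intros r Hr. destruct (Req_dec r m) as [->|]; auto. apply Hbelow; lra. }
  destruct (Req_dec m T) as [<-|HmT']; auto.
  destruct (Hstep m ltac:(lra) Pm) as [eta [Heta Hh]].
  set (s := m + Rmin (eta / 2) (T - m)).
  assert (Hmin1 : Rmin (eta / 2) (T - m) <= eta / 2) by apply Rmin_l.
  assert (Hmin2 : Rmin (eta / 2) (T - m) <= T - m) by apply Rmin_r.
  assert (Hmin3 : 0 < Rmin (eta / 2) (T - m)) by (apply Rmin_glb_lt; lra).
  assert (HEs : E s).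
  { split; [unfold s; lra|]. intros r Hr. destruct (Rle_dec r m).
    - apply HEm. lra.
    - replace r with (m + (r - m)) by ring. apply Hh. unfold s in Hr. lra. }
  specialize (Hub s HEs). unfold s in Hub. lra.
Qed.

Lemma Rle_of_le_plus_small a b K t0 : 0 < t0 -> 0 <= K ->
  (forall t, 0 < t < t0 -> a <= b + K * t) -> a <= b.
Proof.
  intros Ht0 HK H. destruct (Rle_dec a b) as [|Hn]; auto. exfalso.
  set (t := Rmin (t0 / 2) ((a - b) / (2 * (K + 1)))).
  assert (t1 : t <= t0 / 2) by apply Rmin_l.
  assert (t2 : t <= (a - b) / (2 * (K + 1))) by apply Rmin_r.
  assert (t3 : 0 < t) by (apply Rmin_glb_lt; [lra | apply Rdiv_lt_0_compat; lra]).
  specialize (H t ltac:(lra)).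
  assert ((K + 1) * t <= (a - b) / 2).
  { apply Rle_trans with ((K + 1) * ((a - b) / (2 * (K + 1)))).
    - apply Rmult_le_compat_l; lra.
    - right. field. lra. }
  nra.
Qed.

Lemma le_initial_of_right_dini_nonpos (phi : R -> R) T : 0 <= T ->
  (forall c, 0 < c <= T -> exists K eta, 0 <= K /\ 0 < eta /\
     forall r, 0 <= r < c -> c - r < eta -> phi c <= phi r + K * (c - r)) ->
  (forall c, 0 <= c < T -> forall d, 0 < d -> exists eta, 0 < eta /\
     forall h, 0 < h < eta -> phi (c + h) <= phi c + d * h) ->
  phi T <= phi 0.
Proof.
  intros HT Hleft Hright.
  apply (Rle_of_le_plus_small _ _ T 1); [lra | lra |]. intros d Hd.
  rewrite Rmult_comm.
  apply (continuous_induction (fun r => phi r <= phi 0 + d * r) T); auto.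
  - lra.
  - intros c Hc Hbelow. destruct (Hleft c Hc) as [K [eta [HK [Heta Hlip]]]].
    apply (Rle_of_le_plus_small _ _ K (Rmin eta c)); [apply Rmin_glb_lt; lra | auto |].
    intros tau Htau.
    assert (tau1 : tau < eta) by (eapply Rlt_le_trans; [apply Htau | apply Rmin_l]).
    assert (tau2 : tau < c) by (eapply Rlt_le_trans; [apply Htau | apply Rmin_r]).
    specialize (Hlip (c - tau) ltac:(lra) ltac:(lra)). specialize (Hbelow (c - tau) ltac:(lra)).
    replace (c - (c - tau)) with tau in Hlip by ring. nra.
  - intros c Hc Pc. destruct (Hright c Hc d ltac:(lra)) as [eta [Heta Hstep]].
    exists eta. split; auto. intros h Hh. specialize (Hstep h Hh). lra.
Qed.

(* The slack 1 in the rate L + 1 absorbs the o(h) error of the time derivative. *)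
Lemma sup_derivative_gronwall (Y D : R -> R -> R) L d : 0 <= L -> 0 < d -> sup_derivative Y D ->
  (forall t, 0 <= t -> exists B, forall x, Rabs (Y x t) <= B) ->
  (forall t B, 0 <= t -> (forall y, Rabs (Y y t) <= B) -> forall x, Rabs (D x t) <= L * B) ->
  (forall x, Rabs (Y x 0) <= d) -> forall t x, 0 <= t -> Rabs (Y x t) <= d * exp ((L + 1) * t).
Proof.
  intros HL Hd HYD Hbdd HDL HY0 T x HT.
  set (g := fun r => d * exp ((L + 1) * r)).
  assert (Hgmono : forall r c, r <= c -> g r <= g c).
  { intros r c Hrc. unfold g. apply Rmult_le_compat_l; [lra|].
    destruct (Rle_lt_or_eq_dec r c Hrc) as [Hlt | ->]; [|lra].
    left. apply exp_increasing, Rmult_lt_compat_l; lra. }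
  assert (Hg0 : g 0 = d) by (unfold g; rewrite Rmult_0_r, exp_0; ring).
  revert x. change (forall x, Rabs (Y x T) <= g T).
  apply (continuous_induction (fun r => forall x, Rabs (Y x r) <= g r) T); auto.
  - now rewrite Hg0.
  - intros c Hc Hbelow y. destruct (Hbdd c ltac:(lra)) as [B HB].
    assert (HB0 : 0 <= B) by (eapply Rle_trans; [apply Rabs_pos | apply (HB 0)]).
    destruct (sup_derivative_lipschitz Y D c (L * B) HYD ltac:(lra) (HDL c B ltac:(lra) HB))
      as [eta [Heta Hlip]].
    apply (Rle_of_le_plus_small _ _ (L * B + 1) (Rmin eta c)); [apply Rmin_glb_lt; lra | nra |].
    intros tau Htau.
    assert (tau1 : tau < eta) by (eapply Rlt_le_trans; [apply Htau | apply Rmin_l]).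
    assert (tau2 : tau < c) by (eapply Rlt_le_trans; [apply Htau | apply Rmin_r]).
    assert (Hdist : Rabs (c - tau - c) = tau) by (rewrite Rabs_left; lra).
    specialize (Hlip (c - tau) ltac:(lra) ltac:(lra) y).
    rewrite Hdist, Rabs_minus_sym in Hlip.
    specialize (Hbelow (c - tau) ltac:(lra) y). specialize (Hgmono (c - tau) c ltac:(lra)).
    assert (Htri := Rabs_triang_inv (Y y c) (Y y (c - tau))).
    lra.
  - intros c Hc Pc.
    destruct (sup_derivative_remainder Y D c HYD ltac:(lra) d Hd) as [eta [Heta Hrem]].
    exists eta. split; auto. intros h Hh y.
    specialize (Hrem h ltac:(rewrite Rabs_pos_eq; lra) ltac:(lra) y).
    rewrite (Rabs_pos_eq h) in Hrem by lra.
    assert (HD := HDL c (g c) ltac:(lra) Pc y).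
    assert (Hgd : d <= g c) by (rewrite <- Hg0; apply Hgmono; lra).
    assert (Hexp : 1 + (L + 1) * h <= exp ((L + 1) * h))
      by (left; apply exp_ineq1, Rgt_not_eq, Rmult_lt_0_compat; lra).
    assert (Hgstep : g (c + h) = g c * exp ((L + 1) * h))
      by (unfold g; rewrite Rmult_assoc, <- exp_plus; f_equal; f_equal; ring).
    assert (Htri := Rabs_triang_inv (Y y (c + h)) (Y y c + h * D y c)).
    replace (Y y (c + h) - (Y y c + h * D y c)) with (Y y (c + h) - Y y c - h * D y c) in Htri
      by ring.
    assert (Htri2 := Rabs_triang (Y y c) (h * D y c)).
    rewrite Rabs_mult, (Rabs_pos_eq h) in Htri2 by lra.
    specialize (Pc y). rewrite Hgstep.
    nra.
Qed.

Lemma sup_derivative_linear_zero (Y D : R -> R -> R) L : 0 <= L -> sup_derivative Y D ->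
  (forall t, 0 <= t -> exists B, forall x, Rabs (Y x t) <= B) ->
  (forall t B, 0 <= t -> (forall y, Rabs (Y y t) <= B) -> forall x, Rabs (D x t) <= L * B) ->
  (forall x, Y x 0 = 0) -> forall t x, 0 <= t -> Y x t = 0.
Proof.
  intros HL HYD Hbdd HDL HY0 T x HT.
  assert (Habs : Rabs (Y x T) <= 0).
  { apply (Rle_of_le_plus_small _ _ (exp ((L + 1) * T)) 1); [lra | left; apply exp_pos |].
    intros d Hd. rewrite Rplus_0_l, Rmult_comm.
    apply (sup_derivative_gronwall Y D L d); auto; [lra|].
    intros y. rewrite HY0, Rabs_R0. lra. }
  apply Rabs_eq_0, Rle_antisym; auto using Rabs_pos.
Qed.

Section Solution.

Variables (e M : R) (U : R -> R -> R) (v : R -> R) (X : R -> R -> R).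
Hypothesis He : 0 < e.
Hypothesis HM : 0 < M.
Hypothesis HUp : forall t, 0 <= t -> periodic2pi (fun x => U x t).
Hypothesis HUc : forall t, 0 <= t -> in_Cb (fun x => U x t).
Hypothesis HUb : forall x t, 0 <= t -> Rabs (U x t) <= M.
Hypothesis Hv : periodic2pi v.
Hypothesis HX : is_C1_solution e U v X.

Let L1 (t : R) : R := RInt (fun x => Rabs (X x t)) (- PI) PI.

Lemma solution_periodic t : 0 <= t -> periodic2pi (fun x => X x t).
Proof.
  intros Ht x. destruct HX as [HCb [Hder [_ H0]]].
  enough (Hzero : X (x + 2 * PI) t - X x t = 0) by lra.
  apply (sup_derivative_linear_zero (fun x t => X (x + 2 * PI) t - X x t)
           (fun x t => rhs e U X (x + 2 * PI) t - rhs e U X x t) (3 * M / e)); auto.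
  - apply Rdiv_le_0_compat; lra.
  - now apply sup_derivative_shift_sub.
  - intros s Hs. destruct (HCb s Hs) as [_ [B HB]]. exists (B + B). intros y.
    assert (H1 := HB (y + 2 * PI)). assert (H2 := HB y). revert H1 H2.
    unfold Rabs. repeat destruct Rcase_abs; lra.
  - intros s B Hs HB y. rewrite !rhs_upwind, upwind_sub_shift by now apply HUp.
    apply upwind_bound; auto.
  - intros y. rewrite !H0. apply Rminus_diag_eq, Hv.
Qed.

Lemma solution_L1_left_lipschitz c : 0 < c -> exists K eta, 0 <= K /\ 0 < eta /\
  forall r, 0 <= r < c -> c - r < eta -> L1 c <= L1 r + K * (c - r).
Proof.
  intros Hc. destruct HX as [HCb [Hder _]].
  assert (HPI := PI_RGT_0).
  destruct (HCb c ltac:(lra)) as [HXc [B HB]].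
  assert (HB0 : 0 <= B) by (eapply Rle_trans; [apply Rabs_pos | apply (HB 0)]).
  set (K := 3 * M / e * B + 1).
  assert (HK : 0 <= K) by (unfold K; assert (0 <= 3 * M / e) by (apply Rdiv_le_0_compat; lra); nra).
  destruct (sup_derivative_lipschitz X (rhs e U X) c (3 * M / e * B) Hder ltac:(lra))
    as [eta [Heta Hlip]].
  { intros x. rewrite rhs_upwind. apply upwind_bound; auto. intros y; apply HUb; lra. }
  exists (2 * PI * K), eta. split; [nra|]. split; auto. intros r Hr Hcr.
  destruct (HCb r ltac:(lra)) as [HXr _].
  eapply Rle_trans.
  { apply (RInt_Rle _ (fun x => Rabs (X x r) + K * (c - r))); [lra | solve_continuous.. |].
    intros x. assert (Hdist : Rabs (r - c) = c - r) by (rewrite Rabs_left; lra).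
    specialize (Hlip r ltac:(lra) ltac:(lra) x). rewrite Hdist, Rabs_minus_sym in Hlip.
    assert (Htri := Rabs_triang_inv (X x c) (X x r)). unfold K. lra. }
  unfold L1. rewrite RInt_Rplus_const by solve_continuous. right. ring.
Qed.

Lemma solution_L1_right_step c : 0 <= c -> forall d, 0 < d -> exists eta, 0 < eta /\
  forall h, 0 < h < eta -> L1 (c + h) <= L1 c + d * h.
Proof.
  intros Hc d Hd. destruct HX as [HCb [Hder _]].
  assert (HPI := PI_RGT_0).
  destruct (HCb c Hc) as [HXc _]. destruct (HUc c Hc) as [HUc' _].
  destruct (sup_derivative_remainder X (rhs e U X) c Hder Hc (d / (2 * PI)))
    as [eta [Heta Hrem]]; [apply Rdiv_lt_0_compat; lra|].
  exists (Rmin eta (e / M)). split; [apply Rmin_glb_lt; [lra | apply Rdiv_lt_0_compat; lra]|].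
  intros h Hh.
  assert (Hh1 : h < eta) by (eapply Rlt_le_trans; [apply Hh | apply Rmin_l]).
  assert (Hh2 : h * M <= e).
  { assert (h < e / M) by (eapply Rlt_le_trans; [apply Hh | apply Rmin_r]).
    apply (Rmult_le_reg_r (/ M)); [now apply Rinv_0_lt_compat|].
    replace (e * / M) with (e / M) by reflexivity. field_simplify; lra. }
  set (f := fun x => X x c). set (V := fun x => U x c).
  eapply Rle_trans.
  { apply (RInt_Rle _ (fun x => Rabs (f x + h * upwind e V f x) + h * (d / (2 * PI))));
      [lra | destruct (HCb (c + h) ltac:(lra)); solve_continuous | solve_continuous |].
    intros x. specialize (Hrem h ltac:(rewrite Rabs_pos_eq; lra) ltac:(lra) x).
    rewrite (Rabs_pos_eq h) in Hrem by lra.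
    assert (Htri := Rabs_triang_inv (X x (c + h)) (f x + h * upwind e V f x)).
    replace (X x (c + h) - (f x + h * upwind e V f x))
      with (X x (c + h) - X x c - h * rhs e U X x c) in Htri
      by (rewrite rhs_upwind; unfold f, V; ring).
    lra. }
  rewrite RInt_Rplus_const by solve_continuous.
  replace ((PI - - PI) * (h * (d / (2 * PI)))) with (d * h) by (field; lra).
  apply Rplus_le_compat_r, (upwind_step_L1_le e h M V f); auto; try lra.
  - now apply HUp.
  - now apply solution_periodic.
  - intros x; apply HUb; lra.
Qed.

Lemma solution_L1_nonincreasing t : 0 <= t -> L1 t <= L1 0.
Proof.
  intros Ht. apply le_initial_of_right_dini_nonpos; auto.
  - intros c [Hc _]. now apply solution_L1_left_lipschitz.
  - intros c [Hc _]. now apply solution_L1_right_step.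
Qed.

End Solution.

Theorem lemma1
  (u : R -> R -> R -> R) (v0 : R -> R -> R) (X : R -> R -> R -> R) (M1 : R)
  (Hu_per : forall eps, 0 < eps < 1 -> forall t, 0 <= t ->
     periodic2pi (fun x => u eps x t))
  (Hu_Cb : forall eps, 0 < eps < 1 -> forall t, 0 <= t ->
     in_Cb (fun x => u eps x t))
  (Hu_cont : forall eps, 0 < eps < 1 -> sup_continuous (u eps))
  (HM1 : 0 < M1)
  (Hu_bd : forall eps, 0 < eps < 1 -> forall x t, 0 <= t ->
     Rabs (u eps x t) <= M1)
  (Hv0_Cb : forall eps, 0 < eps < 1 -> in_Cb (v0 eps))
  (Hv0_per : forall eps, 0 < eps < 1 -> periodic2pi (v0 eps))
  (Hv0_L1 : exists K, forall eps, 0 < eps < 1 ->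
     RInt (fun x => Rabs (v0 eps x)) (- PI) PI <= K)
  (HX : forall eps, 0 < eps < 1 -> is_C1_solution eps (u eps) (v0 eps) (X eps)) :
  exists C, 0 < C /\
    forall eps, 0 < eps < 1 -> forall t, 0 <= t ->
      RInt (fun x => Rabs (X eps x t)) (- PI) PI
        <= RInt (fun x => Rabs (v0 eps x)) (- PI) PI
      /\ RInt (fun x => Rabs (v0 eps x)) (- PI) PI <= C.
Proof.
  destruct Hv0_L1 as [K HK].
  exists (Rmax K 1). split; [apply Rlt_le_trans with 1; [lra | apply Rmax_r]|].
  intros eps Heps t Ht. split.
  - assert (Hinit : RInt (fun x => Rabs (X eps x 0)) (- PI) PI
                   = RInt (fun x => Rabs (v0 eps x)) (- PI) PI).
    { apply RInt_ext. intros x _. destruct (HX eps Heps) as [_ [_ [_ H0]]]. now rewrite H0. }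
    rewrite <- Hinit.
    apply (solution_L1_nonincreasing eps M1 (u eps) (v0 eps) (X eps)); auto; lra.
  - eapply Rle_trans; [apply (HK eps Heps) | apply Rmax_l].
Qed.
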